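(* There is an absolute constant $c>0$ such that the following holds. Let $n\ge2$, let $\varepsilon\in[0,\frac{1}{2\ln n}]$, and let $P\subset\mathbb{H}^2$ be a set of $n$ points equally spaced (i.e., consecutive points subtending equal angles $2\pi/n$ at the centre) on a hyperbolic circle of radius $3\ln n$. Then every $(2+\varepsilon)$-spanner for $P$, i.e., every geometric graph $G$ with vertex set $P$ satisfying $\mathrm{dist}_G(u,v)\le(2+\varepsilon)|uv|$ for all $u,v\in P$, has at least $c\, n\log n$ edges.
   Context: $\mathbb{H}^2$ is the hyperbolic plane of curvature $-1$, $|uv|$ hyperbolic distance. A geometric graph has each edge weighted by the distance between its endpoints; $\mathrm{dist}_G$ is shortest-path length in $G$. *)

From Stdlib Require Import Reals.
From mathcomp Require Import all_boot.

Set Implicit Arguments.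
Unset Strict Implicit.
Unset Printing Implicit Defensive.

Local Open Scope R_scope.

Definition acosh (x : R) : R := ln (x + sqrt (x * x - 1)).

(* Hyperboloid model of H^2 (curvature -1):
   points (x0,x1,x2) with x0^2 - x1^2 - x2^2 = 1, x0 > 0. *)
Definition hpoint : Type := (R * R * R)%type.

Definition on_hyperboloid (p : hpoint) : Prop :=
  let '(x0, x1, x2) := p in x0 * x0 - x1 * x1 - x2 * x2 = 1 /\ 0 < x0.

Definition hdist (p q : hpoint) : R :=
  let '(x0, x1, x2) := p in
  let '(y0, y1, y2) := q in
  acosh (x0 * y0 - x1 * y1 - x2 * y2).

(* Point at hyperbolic distance r from the base point o = (1,0,0),
   in direction (angle) t. *)
Definition hcenter : hpoint := (1, 0, 0).
Definition circle_pt (r t : R) : hpoint := (cosh r, sinh r * cos t, sinh r * sin t).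

Definition equi_pt (n : nat) (r th0 : R) (k : 'I_n) : hpoint :=
  circle_pt r (th0 + 2 * PI * INR (nat_of_ord k) / INR n).

(* Undirected geometric graph on vertex set P = {pt k | k : 'I_n};
   an undirected edge {i,j} is present iff E i j || E j i. *)
Definition adj (n : nat) (E : rel 'I_n) : rel 'I_n := fun i j => E i j || E j i.

Fixpoint walk_len (n : nat) (pt : 'I_n -> hpoint) (x : 'I_n) (s : seq 'I_n) : R :=
  match s with
  | [::] => 0
  | y :: s' => hdist (pt x) (pt y) + walk_len pt y s'
  end.

(* G is a t-spanner: dist_G(u,v) <= t |uv| for all u, v, i.e. there is a walk
   in G from u to v of length at most t |uv| (the shortest path length is a
   minimum over finitely many simple paths, so this is equivalent). *)
Definition is_spanner (n : nat) (pt : 'I_n -> hpoint) (E : rel 'I_n) (t : R) : Prop :=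
  forall u v : 'I_n, exists s : seq 'I_n,
    path (adj E) u s /\ last u s = v /\ walk_len pt u s <= t * hdist (pt u) (pt v).

Definition num_edges (n : nat) (E : rel 'I_n) : nat :=
  #|[set p : 'I_n * 'I_n | (p.1 < p.2)%N && adj E p.1 p.2]|.

From Stdlib Require Import Reals Lra Psatz.
From mathcomp Require Import all_boot zify.

(* The points sit at angles [th0 + 2 pi k / n] on the circle of radius [r = 3 ln n], and the
   distance of two of them is [arcosh (1 + sinh r ^ 2 * y)], where [y] is the versine [1 - cos]
   of their angular gap.  Since [sinh r ^ 2 ~ n^6 / 4] while [y >= 8 / n^2], any two points are
   at distance at least [ln (3.9 n^4)], whereas a pair is at distance at most [6 ln n + 1/64];
   hence a path of a [(2 + eps)]-spanner between two points has at most two hops, and for a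
   two-hop path [u a v] the product of the two hop versines is at most [1296 y(u,v)^2], so by
   the triangle inequality for chords the longer hop has versine within a factor [49] of
   [y(u,v)].  Fix a scale [K = 64^j <= n/2] and join each [u] to its rotation by [K] steps:
   [u] or its partner has an incident edge whose versine lies in a window around [(K/n)^2].
   Rotation is injective, so at least [n/2] points, hence [n/4] edges, are in the window; the
   windows of different scales are disjoint and there are about [log_64 n] scales. *)

Set Implicit Arguments.
Unset Strict Implicit.
Unset Printing Implicit Defensive.

(** * Counting edges class by class *)

Lemma card_le_double_cover_inj (T : finType) (A : {set T}) (f : T -> T) :
  injective f -> (forall x, (x \in A) || (f x \in A)) -> #|T| <= 2 * #|A|.
Proof.
move=> f_inj Af.
have nA_fnA : ~: A :&: f @: (~: A) = set0.
  apply/setP => x; rewrite !inE; apply/negP => /andP [xnA /imsetP [y]].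
  by rewrite inE => ynA exy; move: (Af y) xnA ynA; rewrite -exy => /orP [] ->.
have := cardsUI (~: A) (f @: ~: A).
rewrite nA_fnA cards0 addn0 card_imset //.
have := max_card (~: A :|: f @: ~: A); have := cardsC A; lia.
Qed.

Lemma sum_card_disjoint (T : finType) (A : nat -> {set T}) m :
  (forall i j, i != j -> [disjoint A i & A j]) ->
  \sum_(j < m) #|A j| = #|\bigcup_(j < m) A j|.
Proof.
move=> Adisj; elim: m => [|m IH]; first by rewrite !big_ord0 cards0.
rewrite !big_ord_recr /= IH cardsU.
suff /disjoint_setI0 -> : [disjoint \bigcup_(j < m) A j & A m] by rewrite cards0 subn0.
rewrite disjoint_sym; apply: bigcup_disjoint => j _.
by apply: Adisj; rewrite neq_ltn ltn_ord orbT.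
Qed.

Section ClassEdges.

Variables (n : nat) (E : rel 'I_n).

Definition class_edges (P : rel 'I_n) : {set 'I_n * 'I_n} :=
  [set p : 'I_n * 'I_n | [&& (p.1 < p.2)%N, adj E p.1 p.2 & P p.1 p.2]].

Definition class_covered (P : rel 'I_n) : {set 'I_n} :=
  [set x | [exists z, adj E x z && P x z]].

Lemma adjC : symmetric (adj E).
Proof. by move=> a b; rewrite /adj orbC. Qed.

Lemma card_class_covered (P : rel 'I_n) : symmetric P -> irreflexive P ->
  #|class_covered P| <= 2 * #|class_edges P|.
Proof.
move=> P_sym P_irr; set C := class_edges P.
have cov_sub : class_covered P \subset fst @: C :|: snd @: C.
  apply/subsetP => x; rewrite inE => /existsP [z /andP [xz Pxz]].
  rewrite inE; case: (ltngtP x z) => [xz_lt|zx_lt|/val_inj exz].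
  - by apply/orP; left; apply/imsetP; exists (x, z); rewrite // inE xz_lt xz Pxz.
  - apply/orP; right; apply/imsetP; exists (z, x) => //.
    by rewrite inE zx_lt adjC xz P_sym Pxz.
  - by rewrite exz P_irr in Pxz.
rewrite (leq_trans (subset_leq_card cov_sub)) // mul2n -addnn.
by rewrite (leq_trans (leq_card_setU _ _).1) // leq_add ?leq_imset_card.
Qed.

Lemma class_edges_ge (P : rel 'I_n) (f : 'I_n -> 'I_n) :
  symmetric P -> irreflexive P -> injective f ->
  (forall u, exists x z, (x = u \/ x = f u) /\ adj E x z /\ P x z) ->
  n <= 4 * #|class_edges P|.
Proof.
move=> P_sym P_irr f_inj cover.
have cov : forall u, (u \in class_covered P) || (f u \in class_covered P).
  move=> u; have [x [z [ex [xz Pxz]]]] := cover u.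
  have : x \in class_covered P by rewrite inE; apply/existsP; exists z; rewrite xz.
  by case: ex => <- ->; rewrite ?orbT.
have := card_le_double_cover_inj f_inj cov; rewrite card_ord => /leq_trans-> //.
by rewrite -[4]/(2 * 2) -mulnA leq_mul2l card_class_covered.
Qed.

Lemma sum_class_edges_le (P : nat -> rel 'I_n) m :
  (forall i j x z, P i x z -> P j x z -> i = j) ->
  \sum_(j < m) #|class_edges (P j)| <= num_edges E.
Proof.
move=> P_disj; rewrite (@sum_card_disjoint _ (fun j => class_edges (P j))).
  apply/subset_leq_card/subsetP => p /bigcupP [j _]; rewrite !inE.
  by case/and3P => -> ->.
move=> i j ij; rewrite -setI_eq0; apply/eqP/setP => p; rewrite !inE.
apply/negP => /andP [/and3P [_ _ Pi] /and3P [_ _ Pj]].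
by move: ij; rewrite (P_disj _ _ _ _ Pi Pj) eqxx.
Qed.

End ClassEdges.

Definition ord_rot n (K : nat) (u : 'I_n) : 'I_n :=
  Ordinal (ltn_pmod (u + K) (leq_ltn_trans (leq0n u) (ltn_ord u))).

Lemma ord_rot_inj n K : injective (@ord_rot n K).
Proof.
move=> u w /(congr1 val) /= /eqP; rewrite eqn_modDr !modn_small //.
by move/eqP/val_inj.
Qed.

Local Open Scope R_scope.

(** * Real estimates *)

Lemma INR_addn a b : INR (a + b)%N = INR a + INR b.
Proof. by rewrite -plusE plus_INR. Qed.

Lemma INR_muln a b : INR (a * b)%N = INR a * INR b.
Proof. by rewrite -multE mult_INR. Qed.

Lemma INR_expn b k : INR (b ^ k)%N = INR b ^ k.
Proof. by elim: k => [|k IHk] //; rewrite expnS INR_muln IHk. Qed.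

Lemma INR_le_nat m k : (m <= k)%N -> INR m <= INR k.
Proof. by move/leP; apply: le_INR. Qed.

Lemma INR_ge2 n : (2 <= n)%N -> 2 <= INR n.
Proof. by move/INR_le_nat; rewrite /=; lra. Qed.

Lemma div_le_mul a b c : 0 < c -> a / c <= b -> a <= b * c.
Proof.
move=> c_gt0 h; have := Rmult_le_compat_r c _ _ (Rlt_le _ _ c_gt0) h.
by rewrite /Rdiv Rmult_assoc Rinv_l ?Rmult_1_r; lra.
Qed.

Lemma pow_ge_2pow N k : 2 <= N -> 2 ^ k <= N ^ k.
Proof. by move=> N_ge2; apply: pow_incr; lra. Qed.

Lemma ln_le_ln a b : 0 < a -> a <= b -> ln a <= ln b.
Proof.
move=> a_gt0 [ab|->]; last by right.
by left; apply: ln_increasing.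
Qed.

Lemma exp_le_exp x y : x <= y -> exp x <= exp y.
Proof. by case=> [xy|->]; [left; apply: exp_increasing | right]. Qed.

Lemma exp_le_ln a b : 0 < b -> exp a <= b -> a <= ln b.
Proof. by move=> b_gt0 /(ln_le_ln (exp_pos a)); rewrite ln_exp. Qed.

Lemma exp_le_inv_1m x : x < 1 -> exp x <= / (1 - x).
Proof.
move=> x_lt1.
have h : (1 - x) * exp x <= 1.
  have := exp_ineq1_le (- x); have := exp_pos x.
  rewrite -(exp_0) (_ : 0 = - x + x); last ring.
  rewrite exp_plus; nra.
apply: (Rmult_le_reg_l (1 - x)); first lra.
by rewrite Rinv_r; lra.
Qed.

Lemma ln2_ge_half : 1 / 2 <= ln 2.
Proof. apply: exp_le_ln; first lra; have := @exp_le_inv_1m (1 / 2); lra. Qed.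

Lemma ln_ge_half N : 2 <= N -> 1 / 2 <= ln N.
Proof. move=> N_ge2; have := ln_le_ln (_ : 0 < 2) N_ge2; have := ln2_ge_half; lra. Qed.

Lemma ln_3_9_ge : 1.02 <= ln 3.9.
Proof.
apply: exp_le_ln; first lra.
rewrite (_ : 1.02 = 1 + 0.02); last lra.
rewrite exp_plus; have := exp_le_3; have := exp_pos 1; have := @exp_le_inv_1m 0.02.
rewrite (_ : 1 - 0.02 = 49 / 50) ?Rinv_div; nra.
Qed.

Lemma exp_4_le : exp 4 <= 81.
Proof.
rewrite (_ : 4 = 1 + 1 + 1 + 1); last lra.
rewrite !exp_plus; have := exp_le_3; have := exp_pos 1 => e_gt0 e_le3.
have : exp 1 * exp 1 <= 9 by nra.
nra.
Qed.

Lemma ln_1p_le x : 0 <= x -> ln (1 + x) <= x.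
Proof. by move=> x_ge0; rewrite -{2}(ln_exp x); apply: ln_le_ln; [lra | apply: exp_ineq1_le]. Qed.

Lemma acosh_arg_bounds Q : 1 <= Q ->
  2 * Q - 1 <= Q + sqrt (Q * Q - 1) <= 2 * Q.
Proof.
move=> Q_ge1; split.
- suff : Q - 1 <= sqrt (Q * Q - 1) by lra.
  rewrite -(sqrt_square (Q - 1)); last lra.
  apply: sqrt_le_1_alt; nra.
- suff : sqrt (Q * Q - 1) <= Q by lra.
  rewrite -[X in _ <= X](sqrt_square Q); last lra.
  apply: sqrt_le_1_alt; lra.
Qed.

Lemma acosh_ge_ln_2m1 Q : 1 <= Q -> ln (2 * Q - 1) <= acosh Q.
Proof.
by move=> Q_ge1; have [? ?] := acosh_arg_bounds Q_ge1; rewrite /acosh; apply: ln_le_ln; lra.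
Qed.

Lemma acosh_le_ln_2 Q : 1 <= Q -> acosh Q <= ln (2 * Q).
Proof.
by move=> Q_ge1; have [? ?] := acosh_arg_bounds Q_ge1; rewrite /acosh; apply: ln_le_ln; lra.
Qed.

Lemma acosh_ge_ln Q : 1 <= Q -> ln Q <= acosh Q.
Proof.
move=> Q_ge1; apply: Rle_trans (acosh_ge_ln_2m1 Q_ge1).
by apply: ln_le_ln; lra.
Qed.

Lemma acosh_ge0 Q : 1 <= Q -> 0 <= acosh Q.
Proof.
move=> Q_ge1; rewrite -ln_1; apply: Rle_trans (acosh_ge_ln Q_ge1).
by apply: ln_le_ln; lra.
Qed.

Lemma acosh_1 : acosh 1 = 0.
Proof. by rewrite /acosh (_ : 1 * 1 - 1 = 0) ?sqrt_0 ?Rplus_0_r ?ln_1 //; ring. Qed.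

Definition versin (x : R) : R := 1 - cos x.

Lemma versin_opp x : versin (- x) = versin x.
Proof. by rewrite /versin cos_neg. Qed.

Lemma versin_0 : versin 0 = 0.
Proof. by rewrite /versin cos_0; ring. Qed.

Lemma versin_bounds x : 0 <= versin x <= 2.
Proof. by rewrite /versin; have := COS_bound x; lra. Qed.

Lemma versin_double x : versin (2 * x) = 2 * sin x ^ 2.
Proof. by rewrite /versin cos_2a_sin; ring. Qed.

Lemma dist_euc_unit_circle a b :
  dist_euc (cos a) (sin a) (cos b) (sin b) = sqrt 2 * sqrt (versin (a - b)).
Proof.
rewrite /dist_euc -sqrt_mult; try lra; last by have := versin_bounds (a - b); lra.
congr sqrt; rewrite /versin cos_minus /Rsqr.
have := sin2_cos2 a; have := sin2_cos2 b; rewrite /Rsqr; nra.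
Qed.

Lemma sqrt_versin_triangle a b c :
  sqrt (versin (a - c)) <= sqrt (versin (a - b)) + sqrt (versin (b - c)).
Proof.
have sqrt2_gt0 : 0 < sqrt 2 by apply: sqrt_lt_R0; lra.
apply: (Rmult_le_reg_l (sqrt 2)) => //; rewrite Rmult_plus_distr_l.
rewrite -!dist_euc_unit_circle; exact: triangle.
Qed.

Lemma hdist_circle_pt r a b :
  hdist (circle_pt r a) (circle_pt r b) = acosh (1 + sinh r ^ 2 * versin (a - b)).
Proof.
rewrite /hdist /circle_pt /versin cos_minus; congr acosh.
have : cosh r * cosh r - sinh r * sinh r = 1.
  rewrite /cosh /sinh; have := exp_pos r; have := exp_pos (- r).
  have : exp r * exp (- r) = 1 by rewrite -exp_plus Rplus_opp_r exp_0.
  nra.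
nra.
Qed.

Lemma sin_ge_cubic z : 0 <= z <= PI -> z - z ^ 3 / 6 <= sin z.
Proof.
case=> z_ge0 z_lePI; have [+ _] := sin_bound z 0 z_ge0 z_lePI.
by rewrite (_ : sin_approx _ _ = z - z ^ 3 / 6) // /sin_approx /sin_term /=; field.
Qed.

Lemma sin_le_id z : 0 <= z <= PI -> sin z <= z.
Proof.
case=> z_ge0 z_lePI; have [_] := sin_bound z 0 z_ge0 z_lePI.
rewrite (_ : sin_approx _ _ = z - z ^ 3 / 6 + z ^ 5 / 120); last first.
  by rewrite /sin_approx /sin_term /=; field.
have : z * z <= 20 by have := PI_4; nra.
have : 0 <= z ^ 3 by apply: pow_le.
rewrite (_ : z ^ 5 = z ^ 3 * (z * z)); [nra | ring].
Qed.

Lemma versin_scale K N : 1 <= K -> 2 * K <= N ->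
  2 * (K / N) ^ 2 <= versin (2 * PI * K / N) <= 32 * (K / N) ^ 2.
Proof.
move=> K_ge1 N_ge2K; have := PI2_3_2; have := PI_4 => PI_le4 PI_gt3.
have r_gt0 : 0 < K / N by apply: Rdiv_lt_0_compat; lra.
have r_le : K / N <= 1 / 2.
  by apply: (Rmult_le_reg_r N); [lra | rewrite /Rdiv Rmult_assoc Rinv_l; lra].
rewrite (_ : 2 * PI * K / N = 2 * (PI * (K / N))); last by field; lra.
rewrite versin_double; move: r_gt0 r_le; set r := K / N => r_gt0 r_le.
have z_bd : 0 <= PI * r <= 2 by nra.
have sin_hi : sin (PI * r) <= PI * r by apply: sin_le_id; lra.
have sin_lo : PI * r - (PI * r) ^ 3 / 6 <= sin (PI * r) by apply: sin_ge_cubic; lra.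
have cube_le : (PI * r) ^ 3 <= 4 * (PI * r).
  have sq_le : (PI * r) * (PI * r) <= 4 by nra.
  rewrite (_ : (PI * r) ^ 3 = (PI * r) * (PI * r) * (PI * r)); [nra | ring].
have sin_ge_r : r <= sin (PI * r) by nra.
have sin_le_4r : sin (PI * r) <= 4 * r by nra.
split.
- have := pow_incr r (sin (PI * r)) 2 (conj (Rlt_le _ _ r_gt0) sin_ge_r); lra.
- have sin_ge0 : 0 <= sin (PI * r) by lra.
  have := pow_incr (sin (PI * r)) (4 * r) 2 (conj sin_ge0 sin_le_4r); lra.
Qed.

Lemma sin_PI_div_ge n : (2 <= n)%N -> 2 / INR n <= sin (PI / INR n).
Proof.
rewrite leq_eqVlt => /orP [/eqP <- | n_ge3].
  by rewrite (_ : INR 2 = 2) ?sin_PI2; [lra | rewrite /=; ring].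
have N_ge3 : 3 <= INR n by have := INR_le_nat n_ge3; rewrite /=; lra.
have := PI2_3_2; have := PI_4 => PI_le4 PI_gt3.
have x_lo : 3 / INR n <= PI / INR n.
  by apply: Rmult_le_compat_r; [apply/Rlt_le/Rinv_0_lt_compat; lra | lra].
have x_hi : PI / INR n <= 4 / 3.
  by apply: (Rmult_le_reg_r (INR n)); [lra | rewrite /Rdiv Rmult_assoc Rinv_l; lra].
have x_ge0 : 0 <= PI / INR n by apply/Rlt_le/Rdiv_lt_0_compat; lra.
have : PI / INR n - (PI / INR n) ^ 3 / 6 <= sin (PI / INR n) by apply: sin_ge_cubic; lra.
move: x_lo x_hi x_ge0; set x := PI / INR n => x_lo x_hi x_ge0 sin_lo.
have cube_le : x ^ 3 <= 16 / 9 * x.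
  have sq_le : x * x <= 16 / 9 by nra.
  rewrite (_ : x ^ 3 = x * x * x); [nra | ring].
have : 2 / INR n <= 19 / 27 * (3 / INR n).
  by rewrite /Rdiv; have := Rinv_0_lt_compat (INR n) ltac:(lra); nra.
nra.
Qed.

Lemma versin_gap_ge n d : (2 <= n)%N -> (0 < d < n)%N ->
  8 / INR n ^ 2 <= versin (2 * PI * INR d / INR n).
Proof.
move=> n_ge2 /andP [d_gt0 d_ltn].
have N_ge2 := INR_ge2 n_ge2.
have d_ge1 : 1 <= INR d by have := INR_le_nat d_gt0.
have d_le : INR d + 1 <= INR n by have := INR_le_nat d_ltn; rewrite S_INR.
have := PI2_3_2 => PI_gt3.
have Ninv_gt0 : 0 < / INR n by apply: Rinv_0_lt_compat; lra.
have a_ge := sin_PI_div_ge n_ge2.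
rewrite (_ : 2 * PI * INR d / INR n = 2 * (PI * INR d / INR n)); last by field; lra.
rewrite versin_double.
have a_gt0 : 0 < PI / INR n by apply: Rdiv_lt_0_compat; lra.
have a_le : PI / INR n <= PI / 2.
  by apply: Rmult_le_compat_l; [lra | apply: Rinv_le_contravar; lra].
have x_lo : PI / INR n <= PI * INR d / INR n by rewrite /Rdiv; nra.
have x_hi : PI * INR d / INR n <= PI - PI / INR n.
  rewrite (_ : PI - PI / INR n = PI * (INR n - 1) / INR n); last by field; lra.
  by rewrite /Rdiv; nra.
have sin_x_ge : sin (PI / INR n) <= sin (PI * INR d / INR n).
  have [x_le|x_gt] := Rle_or_lt (PI * INR d / INR n) (PI / 2).
    by apply: sin_incr_1; lra.
  by rewrite -(sin_PI_x (PI * INR d / INR n)); apply: sin_incr_1; lra.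
have := pow_incr (2 / INR n) (sin (PI * INR d / INR n)) 2.
rewrite (_ : 8 / INR n ^ 2 = 2 * (2 / INR n) ^ 2); last by field; lra.
have : 0 <= 2 / INR n by rewrite /Rdiv; lra.
lra.
Qed.

(** * Distances on the circle of radius [3 ln N] *)

Lemma sinh_3ln_sq N : 0 < N -> 4 * sinh (3 * ln N) ^ 2 = N ^ 6 - 2 + / N ^ 6.
Proof.
move=> N_gt0; rewrite /sinh exp_Ropp (_ : 3 * ln N = ln N + ln N + ln N); last ring.
by rewrite !exp_plus exp_ln //; field; lra.
Qed.

Lemma sinh_3ln_sq_bounds N : 2 <= N ->
  N ^ 6 - 2 <= 4 * sinh (3 * ln N) ^ 2 <= N ^ 6.
Proof.
move=> N_ge2; rewrite sinh_3ln_sq; last lra.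
have N6_ge : 64 <= N ^ 6 by have := pow_ge_2pow 6 N_ge2; rewrite /=; lra.
have : / N ^ 6 <= 1 by rewrite -Rinv_1; apply: Rinv_le_contravar; lra.
have : 0 < / N ^ 6 by apply: Rinv_0_lt_compat; lra.
lra.
Qed.

(* The distance between two points of the circle of radius [3 ln N] whose angular gap has
   versine [y] (see [hdist_circle_pt]). *)
Definition circ_dist (N y : R) : R := acosh (1 + sinh (3 * ln N) ^ 2 * y).

Lemma circ_dist_0 N : circ_dist N 0 = 0.
Proof. by rewrite /circ_dist Rmult_0_r Rplus_0_r acosh_1. Qed.

Lemma circ_dist_ge0 N y : 0 <= y -> 0 <= circ_dist N y.
Proof. by move=> y_ge0; apply: acosh_ge0; have := pow2_ge_0 (sinh (3 * ln N)); nra. Qed.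

Lemma circ_dist_ge N y : 2 <= N -> 8 / N ^ 2 <= y -> ln (3.9 * N ^ 4) <= circ_dist N y.
Proof.
move=> N_ge2 y_ge; have [S_lo _] := sinh_3ln_sq_bounds N_ge2.
have M_ge4 : 4 <= N ^ 2 by have := pow_ge_2pow 2 N_ge2; rewrite /=; lra.
have yM_ge8 : 8 <= y * N ^ 2 by apply: div_le_mul; lra.
move: S_lo; set S := sinh (3 * ln N) ^ 2 => S_lo.
have S_ge0 : 0 <= S by apply: pow2_ge_0.
apply: Rle_trans (acosh_ge_ln_2m1 _); last by nra.
apply: ln_le_ln; first by have := pow_lt N 4; nra.
rewrite (_ : N ^ 6 = N ^ 2 * N ^ 2 * N ^ 2) in S_lo; last ring.
rewrite (_ : N ^ 4 = N ^ 2 * N ^ 2); last ring.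
move: M_ge4 yM_ge8 S_lo; set M := N ^ 2 => M_ge4 yM_ge8 S_lo.
have : 4 * M * M - 8 / M <= 2 * S * y.
  apply: (Rmult_le_reg_r M); first lra.
  rewrite (_ : (4 * M * M - 8 / M) * M = 4 * (M * M * M - 2)); [nra | field; lra].
have : 8 / M <= 8 / 4 by apply: Rmult_le_compat_l; [lra | apply: Rinv_le_contravar; lra].
rewrite -/S; nra.
Qed.

Lemma circ_dist_le N y : 2 <= N -> 0 <= y <= 2 -> circ_dist N y <= 6 * ln N + 1 / 64.
Proof.
move=> N_ge2 y_bd; have := @sinh_3ln_sq N ltac:(lra); have [_ S_hi] := sinh_3ln_sq_bounds N_ge2.
move: S_hi; set S := sinh (3 * ln N) ^ 2 => S_hi S_eq.
have S_ge0 : 0 <= S by apply: pow2_ge_0.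
have N6_ge : 64 <= N ^ 6 by have := pow_ge_2pow 6 N_ge2; rewrite /=; lra.
have N6_gt0 : 0 < N ^ 6 by lra.
apply: Rle_trans (acosh_le_ln_2 _) _; first nra.
have inv_le : / N ^ 6 <= N ^ 6 / 64.
  have : / N ^ 6 <= / 64 by apply: Rinv_le_contravar; lra.
  rewrite /Rdiv; lra.
apply: (Rle_trans _ (ln (N ^ 6 * (1 + 1 / 64)))).
  by apply: ln_le_ln; rewrite -/S; nra.
rewrite ln_mult ?ln_pow; try lra.
have := @ln_1p_le (1 / 64); rewrite /=; lra.
Qed.

Lemma eps_circ_dist_le N y eps : 2 <= N -> 0 <= y <= 2 ->
  0 <= eps <= 1 / (2 * ln N) -> eps * circ_dist N y <= 3 + 1 / 64.
Proof.
move=> N_ge2 y_bd [eps_ge0 eps_le]; have ln_ge := ln_ge_half N_ge2.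
have eps_ln : eps * (2 * ln N) <= 1.
  have := Rmult_le_compat_r (2 * ln N) _ _ ltac:(lra) eps_le.
  by rewrite /Rdiv Rmult_1_l Rinv_l; lra.
have := circ_dist_le N_ge2 y_bd; have := circ_dist_ge0 N (proj1 y_bd); nra.
Qed.

(* [ln (3.9 N^4)] bounds the distance of any two distinct points from below ([circ_dist_ge]). *)
Lemma three_hops_too_long N y eps : 2 <= N -> 0 <= y <= 2 ->
  0 <= eps <= 1 / (2 * ln N) -> (2 + eps) * circ_dist N y < 3 * ln (3.9 * N ^ 4).
Proof.
move=> N_ge2 y_bd eps_bd.
have N4_gt0 : 0 < N ^ 4 by apply: pow_lt; lra.
rewrite ln_mult ?ln_pow //; try lra.
have := eps_circ_dist_le N_ge2 y_bd eps_bd; have := circ_dist_le N_ge2 y_bd.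
have := ln_3_9_ge; rewrite /=; lra.
Qed.

Lemma two_hop_product S ya yb Y : 0 < S -> 0 <= ya -> 0 <= yb -> 1 <= S * Y ->
  acosh (1 + S * ya) + acosh (1 + S * yb) <= 2 * acosh (1 + S * Y) + 4 ->
  ya * yb <= 1296 * Y ^ 2.
Proof.
move=> S_gt0 ya_ge0 yb_ge0 SY_ge1 hops.
have prod_gt0 : 0 < (1 + S * ya) * (1 + S * yb) by apply: Rmult_lt_0_compat; nra.
have bound_gt0 : 0 < (2 * (1 + S * Y)) ^ 2 * exp 4
  by apply: Rmult_lt_0_compat; [apply: pow_lt; nra | exact: exp_pos].
have : (1 + S * ya) * (1 + S * yb) <= (2 * (1 + S * Y)) ^ 2 * exp 4.
  rewrite -[X in X <= _]exp_ln // -[X in _ <= X]exp_ln //; apply: exp_le_exp.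
  rewrite !ln_mult ?ln_exp ?ln_pow; try nra; last by apply: exp_pos.
  have : ln (1 + S * ya) <= acosh (1 + S * ya) by apply: acosh_ge_ln; nra.
  have : ln (1 + S * yb) <= acosh (1 + S * yb) by apply: acosh_ge_ln; nra.
  have : acosh (1 + S * Y) <= ln (2 * (1 + S * Y)) by apply: acosh_le_ln_2; nra.
  rewrite ln_mult ?ln_1; lra.
have := exp_4_le; have := exp_pos 4 => e4_gt0 e4_le prod_le.
suff : S * S * (ya * yb) <= S * S * (1296 * Y ^ 2) by apply: Rmult_le_reg_l; nra.
nra.
Qed.

Lemma one_le_sinh_sq_mul N Y : 2 <= N -> 2 / N ^ 2 <= Y -> 1 <= sinh (3 * ln N) ^ 2 * Y.
Proof.
move=> N_ge2 Y_ge; have [S_lo _] := sinh_3ln_sq_bounds N_ge2.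
have M_ge4 : 4 <= N ^ 2 by have := pow_ge_2pow 2 N_ge2; rewrite /=; lra.
have YM_ge2 : 2 <= Y * N ^ 2 by apply: div_le_mul; lra.
rewrite (_ : N ^ 6 = N ^ 2 * N ^ 2 * N ^ 2) in S_lo; last ring.
move: M_ge4 YM_ge2 S_lo; set M := N ^ 2; set S := sinh _ ^ 2 => M_ge4 YM_ge2 S_lo.
have S_ge0 : 0 <= S by apply: pow2_ge_0.
apply: (Rmult_le_reg_r M); first lra.
have : 2 * M <= M * M * M - 2 by nra.
nra.
Qed.

Lemma larger_hop_scale ya yb Y : 0 <= yb <= ya -> 0 <= Y ->
  ya * yb <= 1296 * Y ^ 2 ->
  sqrt Y <= sqrt ya + sqrt yb -> sqrt ya <= sqrt Y + sqrt yb ->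
  Y / 4 <= ya <= 49 * Y.
Proof.
move=> [yb_ge0 yb_le] Y_ge0; have ya_ge0 : 0 <= ya by lra.
move: (sqrt_sqrt ya ya_ge0) (sqrt_sqrt yb yb_ge0) (sqrt_sqrt Y Y_ge0) yb_le.
move: (sqrt_pos ya) (sqrt_pos yb) (sqrt_pos Y).
move: (sqrt ya) (sqrt yb) (sqrt Y) => a b c a_ge0 b_ge0 c_ge0 <- <- <-.
move=> ba_sq prod_le c_le a_le.
have b_le_a : b <= a by nra.
have ab_le : a * b <= 36 * (c * c).
  have : (a * b) * (a * b) <= (36 * (c * c)) * (36 * (c * c)) by nra.
  by nra.
have b_le : b <= 6 * c by nra.
split; nra.
Qed.

(** * Short spanner paths *)

Section Walks.

Variables (n : nat) (pt : 'I_n -> hpoint).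

Fixpoint destutter (x : 'I_n) (s : seq 'I_n) : seq 'I_n :=
  if s is y :: s' then (if y == x then destutter x s' else y :: destutter y s') else [::].

Lemma destutter_path (e : rel 'I_n) x s : path e x s -> path e x (destutter x s).
Proof.
elim: s x => [|y s IHs] x //= /andP [exy ys].
by case: eqP => [<-|_] /=; [exact: IHs | rewrite exy IHs].
Qed.

Lemma last_destutter x s : last x (destutter x s) = last x s.
Proof. by elim: s x => [|y s IHs] x //=; case: eqP => [<-|_] /=; apply: IHs. Qed.

Lemma destutter_neq x s : path (fun a b => a != b) x (destutter x s).
Proof.
elim: s x => [|y s IHs] x //=.
by case: eqP => [_|/eqP yx] //=; rewrite eq_sym yx IHs.
Qed.

Hypothesis hdist_refl : forall x, hdist (pt x) (pt x) = 0.

Lemma walk_len_destutter x s : walk_len pt x (destutter x s) = walk_len pt x s.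
Proof.
elim: s x => [|y s IHs] x //=.
by case: eqP => [<-|_] /=; rewrite IHs ?hdist_refl ?Rplus_0_l.
Qed.

Lemma walk_len_ge_size L x t : (forall a b, a != b -> L <= hdist (pt a) (pt b)) ->
  path (fun a b => a != b) x t -> INR (size t) * L <= walk_len pt x t.
Proof.
move=> L_le; elim: t x => [|y t IHt] x; first by rewrite /=; lra.
rewrite [size _]/= [walk_len _ _ _]/= [path _ _ _]/= S_INR.
case/andP => /L_le xy /IHt walk_ge.
by rewrite Rmult_plus_distr_r Rmult_1_l Rplus_comm; apply: Rplus_le_compat.
Qed.

Lemma short_walk_hops (E : rel 'I_n) L u v s : 0 <= L -> u != v ->
  (forall a b, a != b -> L <= hdist (pt a) (pt b)) ->
  path (adj E) u s -> last u s = v -> walk_len pt u s < 3 * L ->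
  adj E u v \/ exists a,
    [/\ adj E u a, adj E a v & hdist (pt u) (pt a) + hdist (pt a) (pt v) <= walk_len pt u s].
Proof.
move=> L_ge0 uv L_le us_path us_last us_short.
rewrite -(walk_len_destutter u s) in us_short *.
rewrite -last_destutter in us_last.
move: (destutter_path us_path) (destutter_neq u s) us_short us_last.
case: (destutter u s) => [|a [|b [|c t]]].
- by move=> _ _ _ /= vu; move: uv; rewrite vu eqxx.
- by rewrite /= andbT Rplus_0_r => ua _ _ <-; left.
- rewrite /= andbT Rplus_0_r => /andP [ua av] _ _ <-; right; exists a; split=> //; lra.
- move=> _ neq_path short _; have walk_ge := walk_len_ge_size L_le neq_path.
  have size_ge3 : 3 <= INR (size [:: a, b, c & t]).
    by rewrite [size _]/= !S_INR; have := pos_INR (size t); lra.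
  exfalso; apply: (Rlt_irrefl (3 * L)); apply: Rle_lt_trans short.
  by apply: Rle_trans walk_ge; apply: Rmult_le_compat_r.
Qed.

End Walks.

Section EquallySpacedCircle.

Variables (n : nat) (th0 : R).

Definition ang (k : 'I_n) : R := th0 + 2 * PI * INR k / INR n.

Definition gap (i j : 'I_n) : R := versin (ang i - ang j).

Lemma hdist_equi_pt i j :
  hdist (equi_pt (3 * ln (INR n)) th0 i) (equi_pt (3 * ln (INR n)) th0 j) =
  circ_dist (INR n) (gap i j).
Proof. exact: hdist_circle_pt. Qed.

Lemma gapC i j : gap i j = gap j i.
Proof. by rewrite /gap -versin_opp Ropp_minus_distr. Qed.

Lemma gap_id i : gap i i = 0.
Proof. by rewrite /gap Rminus_diag versin_0. Qed.

Lemma gap_bounds i j : 0 <= gap i j <= 2.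
Proof. exact: versin_bounds. Qed.

Lemma gap_ord_dist i j : (0 < n)%N ->
  gap i j = versin (2 * PI * (INR i - INR j) / INR n).
Proof.
move=> n_gt0; have : INR n <> 0 by apply: not_0_INR; lia.
by rewrite /gap /ang => N_neq0; congr versin; field.
Qed.

Lemma gap_neq_ge i j : (2 <= n)%N -> i != j -> 8 / INR n ^ 2 <= gap i j.
Proof.
move=> n_ge2; wlog ji : i j / (j < i)%N => [hwlog ij|ij].
  case: (ltngtP j i) => [ji|ij'|/val_inj eji]; first exact: hwlog.
  - by rewrite gapC; apply: hwlog; rewrite // eq_sym.
  - by rewrite eji eqxx in ij.
rewrite gap_ord_dist; last lia.
rewrite -minus_INR; last by apply/leP; lia.
by apply: versin_gap_ge => //; have := ltn_ord i; lia.
Qed.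

Lemma gap_ord_rot K u : gap u (ord_rot K u) = versin (2 * PI * INR K / INR n).
Proof.
have n_gt0 : (0 < n)%N by apply: leq_ltn_trans (ltn_ord u).
rewrite gap_ord_dist //=; have := congr1 INR (divn_eq (u + K) n).
rewrite !INR_addn INR_muln => e.
have N_neq0 : INR n <> 0 by apply: not_0_INR; lia.
rewrite (_ : 2 * PI * (INR u - INR ((u + K) %% n)) / INR n =
             - (2 * PI * INR K / INR n) + 2 * INR ((u + K) %/ n) * PI); last first.
  by rewrite (_ : INR ((u + K) %% n) = INR u + INR K - INR ((u + K) %/ n) * INR n); [field | lra].
by rewrite /versin cos_period -/(versin _) versin_opp.
Qed.

End EquallySpacedCircle.

Lemma two_hop_gap_scale n th0 eps (u a v : 'I_n) :
  (2 <= n)%N -> 0 <= eps <= 1 / (2 * ln (INR n)) -> 2 / INR n ^ 2 <= gap th0 u v ->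
  circ_dist (INR n) (gap th0 u a) + circ_dist (INR n) (gap th0 a v) <=
    (2 + eps) * circ_dist (INR n) (gap th0 u v) ->
  gap th0 u v / 4 <= gap th0 u a <= 49 * gap th0 u v \/
  gap th0 u v / 4 <= gap th0 a v <= 49 * gap th0 u v.
Proof.
move=> n_ge2 eps_bd Y_ge hops.
have N_ge2 := INR_ge2 n_ge2.
have [S_lo _] := sinh_3ln_sq_bounds N_ge2.
have S_gt0 : 0 < sinh (3 * ln (INR n)) ^ 2.
  by have := pow_ge_2pow 6 N_ge2; rewrite /=; lra.
have Y_bd := gap_bounds th0 u v; have ya_bd := gap_bounds th0 u a; have yb_bd := gap_bounds th0 a v.
have prod_le : gap th0 u a * gap th0 a v <= 1296 * gap th0 u v ^ 2.
  apply: (two_hop_product S_gt0); [lra | lra | exact: one_le_sinh_sq_mul |].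
  move: hops; have := eps_circ_dist_le N_ge2 Y_bd eps_bd; rewrite /circ_dist; lra.
have tri_v : sqrt (gap th0 u v) <= sqrt (gap th0 u a) + sqrt (gap th0 a v).
  exact: sqrt_versin_triangle.
have tri_a : sqrt (gap th0 u a) <= sqrt (gap th0 u v) + sqrt (gap th0 a v).
  by rewrite (gapC th0 a v); apply: sqrt_versin_triangle.
have tri_u : sqrt (gap th0 a v) <= sqrt (gap th0 u v) + sqrt (gap th0 u a).
  by rewrite (gapC th0 u a) Rplus_comm; apply: sqrt_versin_triangle.
have [yb_le|ya_lt] := Rle_or_lt (gap th0 a v) (gap th0 u a).
- by left; apply: (larger_hop_scale (yb := gap th0 a v)) => //; lra.
- by right; apply: (larger_hop_scale (yb := gap th0 u a)); rewrite 1?Rmult_comm //; lra.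
Qed.

Lemma spanner_scale_edge n th0 eps (E : rel 'I_n) K (u v : 'I_n) :
  (2 <= n)%N -> 0 <= eps <= 1 / (2 * ln (INR n)) ->
  is_spanner (equi_pt (3 * ln (INR n)) th0) E (2 + eps) ->
  1 <= K -> 2 * K <= INR n -> gap th0 u v = versin (2 * PI * K / INR n) ->
  exists x z, (x = u \/ x = v) /\ adj E x z /\
    1 / 2 * (K / INR n) ^ 2 <= gap th0 x z <= 1568 * (K / INR n) ^ 2.
Proof.
move=> n_ge2 eps_bd span K_ge1 K_le Y_eq.
have N_ge2 := INR_ge2 n_ge2.
have [Y_lo Y_hi] := versin_scale K_ge1 K_le; rewrite -Y_eq in Y_lo Y_hi.
have r_ge : 1 / INR n <= K / INR n by rewrite /Rdiv; have := Rinv_0_lt_compat (INR n); nra.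
have Y_ge : 2 / INR n ^ 2 <= gap th0 u v.
  apply: Rle_trans Y_lo; rewrite (_ : 2 / INR n ^ 2 = 2 * (1 / INR n) ^ 2); last by field; lra.
  have : 0 <= 1 / INR n by apply/Rlt_le/Rdiv_lt_0_compat; lra.
  by move=> ?; have := pow_incr (1 / INR n) (K / INR n) 2; lra.
have uv : u != v.
  apply/eqP => euv; move: Y_ge; rewrite euv gap_id.
  have : 0 < 2 / INR n ^ 2 by apply: Rdiv_lt_0_compat; [lra | apply: pow_lt; lra].
  lra.
set pt := @equi_pt n (3 * ln (INR n)) th0.
have [s [us_path [us_last us_len]]] := span u v.
have L_le a b : a != b -> ln (3.9 * INR n ^ 4) <= hdist (pt a) (pt b).
  by move=> ab; rewrite hdist_equi_pt; apply: circ_dist_ge => //; apply: gap_neq_ge.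
have pt_refl x : hdist (pt x) (pt x) = 0 by rewrite hdist_equi_pt gap_id circ_dist_0.
have L_ge0 : 0 <= ln (3.9 * INR n ^ 4).
  by rewrite -ln_1; apply: ln_le_ln; [lra | have := pow_ge_2pow 4 N_ge2; rewrite /=; lra].
have short : walk_len pt u s < 3 * ln (3.9 * INR n ^ 4).
  apply: Rle_lt_trans us_len _; rewrite hdist_equi_pt.
  exact: three_hops_too_long (gap_bounds th0 u v) eps_bd.
case: (short_walk_hops pt_refl L_ge0 uv L_le us_path us_last short) => [uv_adj|[a [ua av hops]]].
  by exists u, v; split; [left | split=> //; lra].
rewrite !hdist_equi_pt in hops; have {hops} := Rle_trans _ _ _ hops us_len.
rewrite hdist_equi_pt => /(two_hop_gap_scale n_ge2 eps_bd Y_ge) [ya_bd|yb_bd].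
  by exists u, a; split; [left | split=> //; lra].
by exists v, a; split; [right | rewrite adjC gapC; split=> //; lra].
Qed.

(** * Counting over the scales *)

(* The constants come from [versin_scale] and [larger_hop_scale] ([1568 = 32 * 49], [1/2 = 2/4]);
   their ratio [3136 < 64^2] makes the windows of the scales [64^j] disjoint. *)
Definition scale_window n th0 (K : nat) : rel 'I_n := fun x z =>
  Rle_dec (1 / 2 * (INR K / INR n) ^ 2) (gap th0 x z) &&
  Rle_dec (gap th0 x z) (1568 * (INR K / INR n) ^ 2).

Lemma scale_windowP n th0 K (x z : 'I_n) :
  reflect (1 / 2 * (INR K / INR n) ^ 2 <= gap th0 x z <= 1568 * (INR K / INR n) ^ 2)
          (scale_window th0 K x z).
Proof.
apply: (iffP andP) => [[/sumboolP lo /sumboolP hi] | [lo hi]]; first by split.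
by split; apply/sumboolP.
Qed.

Lemma scale_window_disjoint n th0 K K' (x z : 'I_n) : (0 < K)%N -> (64 * K <= K')%N ->
  scale_window th0 K x z -> scale_window th0 K' x z -> False.
Proof.
move=> K_gt0 KK' /scale_windowP [_ hi] /scale_windowP [lo _].
have K_pos : 0 < INR K by exact/lt_0_INR/ltP.
have n_pos : 0 < INR n by apply/lt_0_INR/ltP; apply: leq_ltn_trans (ltn_ord x).
have r_gt0 : 0 < INR K / INR n by apply: Rdiv_lt_0_compat.
have r_le : 64 * (INR K / INR n) <= INR K' / INR n.
  rewrite /Rdiv -Rmult_assoc; apply: Rmult_le_compat_r.
    by apply/Rlt_le/Rinv_0_lt_compat; move: r_gt0; rewrite /Rdiv; nra.
  by rewrite (_ : 64 = INR 64) -?INR_muln; [exact: INR_le_nat | rewrite /=; ring].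
have := pow_incr _ _ 2 (conj (ltac:(lra) : 0 <= 64 * (INR K / INR n)) r_le).
have := pow_lt _ 2 r_gt0; lra.
Qed.

Lemma scale_window_pow64_inj n th0 i j (x z : 'I_n) :
  scale_window th0 (64 ^ i) x z -> scale_window th0 (64 ^ j) x z -> i = j.
Proof.
wlog ij : i j / (i <= j)%N => [hwlog|].
  by case: (leqP i j) => [ij|/ltnW ji] wi wj; [apply: hwlog | apply/esym/hwlog].
move: ij; rewrite leq_eqVlt => /orP [/eqP // | ij_lt] wi wj; exfalso.
apply: (scale_window_disjoint _ _ wi wj); first by rewrite expn_gt0.
by rewrite -expnS leq_pexp2l.
Qed.

Lemma spanner_scale_class_edges n th0 eps (E : rel 'I_n) K :
  (2 <= n)%N -> 0 <= eps <= 1 / (2 * ln (INR n)) ->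
  is_spanner (equi_pt (3 * ln (INR n)) th0) E (2 + eps) ->
  (0 < K)%N -> (2 * K <= n)%N ->
  (n <= 4 * #|class_edges E (scale_window th0 K)|)%N.
Proof.
move=> n_ge2 eps_bd span K_gt0 K_le.
have K_ge1 : 1 <= INR K by exact: (INR_le_nat K_gt0).
have K_le' : 2 * INR K <= INR n by rewrite (_ : 2 = INR 2) // -INR_muln; apply: INR_le_nat.
apply: (class_edges_ge (f := ord_rot K)).
- by move=> x z; apply/idP/idP => /scale_windowP; rewrite gapC => /scale_windowP.
- move=> x; apply/negP => /scale_windowP [+ _]; rewrite gap_id.
  have : 0 < INR K / INR n by apply: Rdiv_lt_0_compat; lra.
  by move=> r_gt0; have := pow_lt _ 2 r_gt0; lra.
- exact: ord_rot_inj.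
- move=> u; have [x [z [xuv [xz win]]]] :=
    spanner_scale_edge n_ge2 eps_bd span K_ge1 K_le' (gap_ord_rot th0 K u).
  by exists x, z; split=> //; split=> //; apply/scale_windowP.
Qed.

Lemma spanner_num_edges_ge n th0 eps (E : rel 'I_n) m :
  (2 <= n)%N -> 0 <= eps <= 1 / (2 * ln (INR n)) ->
  is_spanner (equi_pt (3 * ln (INR n)) th0) E (2 + eps) ->
  (forall j, (j < m)%N -> (2 * 64 ^ j <= n)%N) ->
  (m * n <= 4 * num_edges E)%N.
Proof.
move=> n_ge2 eps_bd span scales.
have := sum_class_edges_le E (P := fun j => scale_window th0 (64 ^ j)) m
  (fun i j x z => @scale_window_pow64_inj n th0 i j x z).
have : (\sum_(j < m) n <= \sum_(j < m) 4 * #|class_edges E (scale_window th0 (64 ^ j))|)%N.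
  apply: leq_sum => j _; apply: spanner_scale_class_edges span _ (scales j (ltn_ord j)) => //.
  by rewrite expn_gt0.
rewrite sum_nat_const card_ord -big_distrr /=; lia.
Qed.

Lemma log64_scales n : (2 <= n)%N ->
  exists m, (forall j, (j < m)%N -> (2 * 64 ^ j <= n)%N) /\ ln (INR n) <= 7 * INR m.
Proof.
move=> n_ge2.
have ex_m : exists m, (n < 2 * 64 ^ m)%N.
  by exists n; have := ltn_expl n (isT : (1 < 64)%N); lia.
case: (ex_minnP ex_m) => m n_lt m_min; exists m; split.
  by move=> j jm; case: (leqP (2 * 64 ^ j) n) => // /m_min; lia.
have m_ge1 : 1 <= INR m.
  apply: (INR_le_nat (m := 1)).
  by case: m n_lt m_min => [|m] n_lt _ //; rewrite expn0 in n_lt; lia.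
have N_le : INR n <= 2 * 64 ^ m.
  have := INR_le_nat (ltnW n_lt); rewrite INR_muln INR_expn.
  by rewrite !INR_IZR_INZ.
have N_gt0 : 0 < INR n by have := INR_ge2 n_ge2; lra.
have ln2_lt1 : ln 2 < 1.
  by rewrite -(ln_exp 1); apply: ln_increasing; [lra | have := exp_ineq1 1; lra].
have := ln_le_ln N_gt0 N_le.
rewrite ln_mult; [| lra | apply: pow_lt; lra].
rewrite (_ : 64 = 2 ^ 6); last by rewrite /=; ring.
rewrite !ln_pow; [| lra | apply: pow_lt; lra].
rewrite (_ : INR 6 = 6); last by rewrite INR_IZR_INZ.
have := ln2_ge_half; nra.
Qed.

Theorem mainTheorem6 :
  exists c : R, 0 < c /\
    forall (n : nat) (eps th0 : R) (E : rel 'I_n),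
      (2 <= n)%N ->
      0 <= eps <= 1 / (2 * ln (INR n)) ->
      is_spanner (@equi_pt n (3 * ln (INR n)) th0) E (2 + eps) ->
      c * INR n * ln (INR n) <= INR (num_edges E).
Proof.
exists (1 / 28); split; first lra.
move=> n eps th0 E n_ge2 eps_bd span.
have [m [scales ln_le]] := log64_scales n_ge2.
have := INR_le_nat (spanner_num_edges_ge n_ge2 eps_bd span scales).
rewrite !INR_muln (_ : INR 4 = 4); last by rewrite INR_IZR_INZ.
have := ln_ge_half (INR_ge2 n_ge2).
have := pos_INR n; nra.
Qed.
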